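(* Let $c\ge2$ and let $d$ be an integer with $1\le d\le c-1$. For every $c$-uniform unoriented hypergraph $\Gamma$ with $E\neq\varnothing$ (and no isolated vertices), with smallest normalized Laplacian eigenvalue $\lambda_1$ (which satisfies $\lambda_1<1$), the $d$-proper coloring number satisfies \[ \chi_d(\Gamma)\;\ge\;\frac{c-\lambda_1}{d-\lambda_1}. \] Moreover, the bound is sharp if and only if $d\mid c$: if equality holds for some such $\Gamma$ then $d\mid c$, and conversely if $d\mid c$ then there exists a $c$-uniform unoriented hypergraph for which equality holds.
   Context: A hypergraph has finite vertex set $V$, $|V|=N$, and edge set $E\subseteq\mathcal P(V)$; it is $c$-uniform if $|e|=c$ for all $e\in E$, and unoriented means all vertex–edge incidences have orientation $+1$. The degree $\deg v=|\{e\in E: v\in e\}|$ is assumed $\ge1$; $D=\mathrm{diag}(\deg v)$. The adjacency matrix has $A_{v,v}=0$ and $A_{v,w}=-|\{e\in E: v,w\in e\}|$ for $v\ne w$; the normalized Laplacian is $L=\mathrm{Id}-D^{-1}A$ with real eigenvalues $\lambda_1\le\dots\le\lambda_N$. For an integer $d\ge1$, a $k$-coloring $V\to\{1,\dots,k\}$ is $d$-proper if every edge contains at most $d$ vertices of each color; $\chi_d(\Gamma)$ is the least $k$ admitting a $d$-proper $k$-coloring. *)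

From mathcomp Require Import all_boot all_order all_algebra.
From mathcomp Require Export reals.
Set Implicit Arguments. Unset Strict Implicit. Unset Printing Implicit Defensive.
Import Order.TTheory GRing.Theory Num.Theory.
Local Open Scope ring_scope.

Section Hypergraph.
Variable V : finType.
(* A hypergraph on vertex set V is given by its edge set E : {set {set V}}.
   Unoriented: every incidence has orientation +1 (implicit). *)
Variable E : {set {set V}}.

Definition uniform (c : nat) : Prop := forall e, e \in E -> #|e| = c.

Definition hdeg (v : V) : nat := #|[set e in E | v \in e]|.

Definition hadj (R : ringType) : 'M[R]_#|V| :=
  \matrix_(i, j) (if i == j then 0
                  else - (#|[set e in E | (enum_val i \in e) && (enum_val j \in e)]|)%:R).

Definition hdegmx (R : ringType) : 'M[R]_#|V| :=
  diag_mx (\row_i (hdeg (enum_val i))%:R).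

Definition hlaplacian (R : fieldType) : 'M[R]_#|V| :=
  1%:M - invmx (hdegmx R) *m hadj R.

Definition smallest_eigenvalue (R : realFieldType) (lam : R) : Prop :=
  eigenvalue (hlaplacian R) lam /\
  (forall mu : R, eigenvalue (hlaplacian R) mu -> lam <= mu).

Definition d_proper (d k : nat) (f : {ffun V -> 'I_k}) : bool :=
  [forall e in E, forall i : 'I_k, #|[set v in e | f v == i]| <= d]%N.

Definition colorable (d k : nat) : bool :=
  [exists f : {ffun V -> 'I_k}, d_proper d f].

(* For d >= 1 the coloring
   by enum_rank shows k = #|V| works, so the least such k is <= #|V| and is
   found by the search below (for d = 0 the value is junk, unused). *)
Definition chi (d : nat) : nat := find (colorable d) (iota 0 #|V|.+1).

End Hypergraph.

From mathcomp Require Import all_boot all_order all_algebra.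
From mathcomp Require Import complex spectral sesquilinear ring lra zify.
Import Order.TTheory GRing.Theory Num.Theory.
Set Implicit Arguments.
Unset Strict Implicit.
Unset Printing Implicit Defensive.
Local Open Scope ring_scope.

(* Let B be the vertex-edge incidence matrix and S = B B^T.  Then D - A = S, so
   L = D^-1 S is similar to the symmetric matrix D^-1/2 S D^-1/2 and the spectral
   theorem gives, for every g : V -> R,
     lam * sum_e sum_(v in e) g v ^ 2 <= sum_e (sum_(v in e) g v) ^ 2.
   For a k-colouring f, apply this to g_a = k 1_(f = a) - 1 and sum over the colours a:
   writing n_a(e) for the number of vertices of e of colour a and m = #|E|,
     lam m c (k^2 - k) <= k^2 sum_e sum_a n_a(e)^2 - m k c^2.
   If f is d-proper then sum_a n_a(e)^2 <= d sum_a n_a(e) = d c, whence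
   lam (k - 1) + c <= k d, which is the bound once lam < 1 (the case d = 1, with one
   colour per vertex).  Equality forces sum_a n_a(e)^2 = d c, so every colour class
   of an edge has 0 or d vertices and d divides c.  Conversely, a single edge of size
   c has lam = 0, since L has nonnegative spectrum and kills any vector summing to 0
   on the edge, and chi_d = c / d. *)

Lemma sum_enum_val (R : nmodType) (T : finType) (F : T -> R) :
  \sum_(i < #|T|) F (enum_val i) = \sum_x F x.
Proof. by rewrite -(big_enum_val F); apply: eq_bigl. Qed.
Arguments sum_enum_val {R T} F.

Lemma natr_card_set_in (R : pzSemiRingType) (T : finType) (A : {set T}) (P : pred T) :
  #|[set x in A | P x]|%:R = \sum_(x in A) (P x)%:R :> R.
Proof.
rewrite -sum1_card natr_sum big_mkcond [RHS]big_mkcond /=.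
by apply: eq_bigr => x _; rewrite inE; case: (x \in A); case: (P x).
Qed.

Lemma sum_indicator1 (R : pzSemiRingType) (T : finType) (x : T) :
  \sum_y (x == y)%:R = 1 :> R.
Proof. by rewrite (bigD1 x) //= eqxx big1 ?addr0 // => y; rewrite eq_sym => /negbTE ->. Qed.

Lemma mulmx_tr_row (R : pzSemiRingType) n (y : 'rV[R]_n) :
  (y *m y^T) 0 0 = \sum_j y 0 j ^+ 2.
Proof. by rewrite mxE; apply: eq_bigr => j _; rewrite mxE. Qed.

Lemma invmx_mul (R : comUnitRingType) n (A B : 'M[R]_n) :
  A \in unitmx -> B \in unitmx -> invmx (A *m B) = invmx B *m invmx A.
Proof.
move=> Au Bu; have ABu : A *m B \in unitmx by rewrite unitmx_mul Au.
have AB_inv : A *m B *m (invmx B *m invmx A) = 1%:M by rewrite mulmxA mulmxK // mulmxV.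
by rewrite -[LHS]mulmx1 -AB_inv mulmxA mulVmx // mul1mx.
Qed.

Lemma eigenvalue_conj_unitmx (F : fieldType) n (Q A : 'M[F]_n) mu :
  Q \in unitmx -> eigenvalue (Q *m A *m invmx Q) mu -> eigenvalue A mu.
Proof.
move=> Qu /eigenvalueP [y yQAQ y_neq0]; apply/eigenvalueP; exists (y *m Q).
  by rewrite scalemxAl -yQAQ !mulmxA mulmxKV.
by apply: contraNneq y_neq0 => yQ0; rewrite -[y](mulmxK Qu) yQ0 mul0mx.
Qed.

Lemma mulmx_tr_row_gt0 (R : realDomainType) n (y : 'rV[R]_n) :
  y != 0 -> 0 < (y *m y^T) 0 0.
Proof.
move=> y_neq0; have sq_ge0 j : 0 <= y 0 j ^+ 2 by exact: sqr_ge0.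
rewrite mulmx_tr_row lt_def sumr_ge0 ?andbT //; apply: contra y_neq0.
rewrite psumr_eq0 // => /allP y0; apply/eqP/rowP => j; rewrite mxE.
by apply/eqP; rewrite -sqrf_eq0; exact: y0 (mem_index_enum j).
Qed.

Section SymmetricQuadraticForm.
Variables (R : rcfType) (n : nat) (P : 'M[R]_n) (lam : R).
Hypotheses (P_sym : P^T = P) (lam_le_eigen : forall mu, eigenvalue P mu -> lam <= mu).

Local Notation toC := (real_complex R).
Local Notation Pc := (map_mx toC P).

(* [conjc_real] is stated for the conjugation of [R[i]]; [^t*] uses [Num.conj]. *)
Lemma conj_real_complex (r : R) : (toC r)^* = toC r.
Proof. exact: conjc_real. Qed.

Lemma map_real_complex_hermsym : Pc \is hermsymmx.
Proof.
apply/is_hermitianmxP; rewrite expr0 scale1r; apply/matrixP => i j.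
by rewrite !mxE conj_real_complex -[in LHS]P_sym mxE.
Qed.

Lemma map_real_complex_spectral :
  Pc = invmx (spectralmx Pc) *m diag_mx (spectral_diag Pc) *m spectralmx Pc.
Proof. exact/orthomx_spectralP/hermitian_normalmx/map_real_complex_hermsym. Qed.

Lemma spectral_diag_real_complex_ge j : toC lam <= spectral_diag Pc 0 j.
Proof.
move: map_real_complex_spectral; set U := spectralmx Pc; set D := spectral_diag Pc.
move=> Pc_spectral.
have eigen_row : row j U *m Pc = D 0 j *: row j U.
  rewrite [in LHS]Pc_spectral -row_mul !mulmxA mulmxV ?spectral_unit // mul1mx.
  by apply/rowP => k; rewrite mul_diag_mx !mxE.
have row_neq0 : row j U != 0.
  apply/eqP => row0; move/row_unitarymxP: (spectral_unitarymx Pc) => /(_ j j).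
  by rewrite row0 eqxx dotmxE mul0mx mxE => /eqP; rewrite eq_sym oner_eq0.
have Dj_real : D 0 j \is Num.real.
  exact: mxOverP (hermitian_spectral_diag_real map_real_complex_hermsym) _ _.
rewrite -(RRe_real Dj_real) lecR; apply: lam_le_eigen.
rewrite -(eigenvalue_map toC) /= (RRe_real Dj_real).
by apply/eigenvalueP; exists (row j U).
Qed.

Lemma symmx_quad_ge (x : 'rV[R]_n) :
  lam * (x *m x^T) 0 0 <= (x *m P *m x^T) 0 0.
Proof.
move: map_real_complex_spectral; set U := spectralmx Pc; set D := spectral_diag Pc.
move=> Pc_spectral; pose xc := map_mx toC x; pose w := (xc *m U ^t*)%sesqui.
have xcT : (xc ^t* = map_mx toC x^T)%sesqui.
  by apply/matrixP => i j; rewrite !mxE conj_real_complex.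
have U_unitary : U \is unitarymx := spectral_unitarymx Pc.
have UtU : ((U ^t*) *m U = 1%:M)%sesqui by rewrite -invmx_unitary // mulVmx ?spectral_unit.
have norm_w : map_mx toC (x *m x^T) = (w *m w ^t*)%sesqui.
  by rewrite map_mxM -xcT /w trmx_mul map_mxM trmxCK mulmxA -(mulmxA xc) UtU mulmx1.
have form_w : map_mx toC (x *m P *m x^T) = (w *m diag_mx D *m w ^t*)%sesqui.
  by rewrite !map_mxM -xcT Pc_spectral invmx_unitary // /w trmx_mul map_mxM trmxCK !mulmxA.
have entry_map (M : 'M[R]_1) : toC (M 0 0) = map_mx toC M 0 0 by rewrite mxE.
rewrite -lecR rmorphM /= !entry_map norm_w form_w !mxE mulr_sumr; apply: ler_sum => j _.
rewrite mul_mx_diag !mxE [X in _ <= X]mulrAC [X in X <= _]mulrC.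
by apply: ler_wpM2l; [exact: mul_conjC_ge0 | exact: spectral_diag_real_complex_ge].
Qed.

End SymmetricQuadraticForm.

Section HypergraphMatrices.
Variables (R : comNzRingType) (V : finType) (E : {set {set V}}).

(* Columns are indexed by all subsets of V; those of non-edges vanish. *)
Definition hincmx : 'M[R]_(#|V|, #|{set V}|) :=
  \matrix_(i, j) (((enum_val i : V) \in (enum_val j : {set V})) && (enum_val j \in E))%:R.

Definition vrow (g : V -> R) : 'rV[R]_#|V| := \row_i g (enum_val i).

Lemma hincmx_mul_tr i k :
  (hincmx *m hincmx^T) i k =
  #|[set e in E | (enum_val i \in e) && (enum_val k \in e)]|%:R.
Proof.
rewrite natr_card_set_in mxE [RHS]big_mkcond -[RHS]sum_enum_val /=.
apply: eq_bigr => j _; rewrite !mxE.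
by case: (enum_val j \in E); case: (_ \in _); case: (_ \in _); rewrite ?andbF ?mulr0 ?mul0r ?mulr1.
Qed.

Lemma hdegmx_subr_hadj : hdegmx E R - hadj E R = hincmx *m hincmx^T.
Proof.
apply/matrixP => i k; rewrite hincmx_mul_tr !mxE; case: eqVneq => [<-|_].
  by rewrite subr0 mulr1n; congr (_%:R); apply: eq_card => e; rewrite !inE andbb.
by rewrite mulr0n sub0r opprK.
Qed.

Lemma vrow_mul_hincmx g j :
  (vrow g *m hincmx) 0 j = (enum_val j \in E)%:R * \sum_(v in enum_val j) g v.
Proof.
rewrite mxE [in RHS]big_mkcond [RHS]mulr_sumr -[RHS]sum_enum_val /=.
apply: eq_bigr => i _; rewrite !mxE.
by case: (enum_val j \in E); case: (_ \in _); rewrite ?mulr0 ?mul0r ?mulr1 ?mul1r.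
Qed.

Lemma hincmx_quad g :
  ((vrow g *m hincmx) *m (vrow g *m hincmx)^T) 0 0 = \sum_(e in E) (\sum_(v in e) g v) ^+ 2.
Proof.
rewrite mulmx_tr_row [RHS]big_mkcond -[RHS]sum_enum_val /=.
apply: eq_bigr => j _; rewrite vrow_mul_hincmx.
by case: (enum_val j \in E); rewrite ?mul1r ?mul0r ?expr0n.
Qed.

Lemma hdegmx_quad g :
  (vrow g *m hdegmx E R *m (vrow g)^T) 0 0 = \sum_(e in E) \sum_(v in e) g v ^+ 2.
Proof.
rewrite /hdegmx mul_mx_diag mxE (exchange_big_dep predT) //= -[RHS]sum_enum_val.
apply: eq_bigr => i _; rewrite !mxE mulrAC -expr2 natr_card_set_in mulr_sumr big_mkcondr.
by apply: eq_bigr => e _; case: (_ \in e); rewrite ?mulr1 ?mulr0.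
Qed.

End HypergraphMatrices.

Section NormalizedLaplacian.
Variables (R : rcfType) (V : finType) (E : {set {set V}}).
Hypothesis hdeg_gt0 : forall v, (0 < hdeg E v)%N.

Definition hdegmx_sqrt : 'M[R]_#|V| :=
  diag_mx (\row_i Num.sqrt (hdeg E (enum_val i))%:R).

Lemma hdegmx_sqrtK : hdegmx_sqrt *m hdegmx_sqrt = hdegmx E R.
Proof.
apply/matrixP => i j; rewrite mulmx_diag !mxE.
by case: eqP => [->|_]; rewrite ?mulr0n // -expr2 sqr_sqrtr ?ler0n.
Qed.

Lemma hdegmx_sqrt_tr : hdegmx_sqrt^T = hdegmx_sqrt.
Proof. exact: tr_diag_mx. Qed.

Lemma hdegmx_sqrt_unit : hdegmx_sqrt \in unitmx.
Proof.
rewrite unitmxE det_diag unitfE prodf_seq_neq0; apply/allP => i _.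
by rewrite mxE sqrtr_eq0 -ltNge ltr0n hdeg_gt0.
Qed.

Lemma hdegmx_unit : hdegmx E R \in unitmx.
Proof. by rewrite -hdegmx_sqrtK unitmx_mul hdegmx_sqrt_unit. Qed.

Lemma hlaplacianE : hlaplacian E R = invmx (hdegmx E R) *m (hincmx R E *m (hincmx R E)^T).
Proof.
by rewrite /hlaplacian -hdegmx_subr_hadj mulmxBr mulVmx ?hdegmx_unit // opprB addrC subrK.
Qed.

Local Notation Qi := (invmx hdegmx_sqrt).

Definition hlaplacian_sym : 'M[R]_#|V| := Qi *m (hincmx R E *m (hincmx R E)^T) *m Qi.

Lemma hlaplacian_sym_tr : hlaplacian_sym^T = hlaplacian_sym.
Proof.
by rewrite /hlaplacian_sym !trmx_mul trmxK trmx_inv tr_diag_mx !mulmxA.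
Qed.

Lemma hlaplacian_symE :
  hlaplacian_sym = hdegmx_sqrt *m hlaplacian E R *m invmx hdegmx_sqrt.
Proof.
rewrite /hlaplacian_sym hlaplacianE -hdegmx_sqrtK invmx_mul ?hdegmx_sqrt_unit //.
by rewrite !mulmxA mulmxV ?hdegmx_sqrt_unit // mul1mx.
Qed.

Lemma hlaplacian_rayleigh (lam : R) : smallest_eigenvalue E lam ->
  forall g : V -> R,
  lam * \sum_(e in E) \sum_(v in e) g v ^+ 2 <= \sum_(e in E) (\sum_(v in e) g v) ^+ 2.
Proof.
move=> [_ lam_min] g; set x := vrow g *m hdegmx_sqrt.
have lam_le_sym mu : eigenvalue hlaplacian_sym mu -> lam <= mu.
  by rewrite hlaplacian_symE => /eigenvalue_conj_unitmx -/(_ hdegmx_sqrt_unit) /lam_min.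
have x_norm : (x *m x^T) 0 0 = \sum_(e in E) \sum_(v in e) g v ^+ 2.
  by rewrite -hdegmx_quad -hdegmx_sqrtK trmx_mul hdegmx_sqrt_tr !mulmxA.
have x_form : (x *m hlaplacian_sym *m x^T) 0 0 = \sum_(e in E) (\sum_(v in e) g v) ^+ 2.
  rewrite -hincmx_quad /x /hlaplacian_sym trmx_mul hdegmx_sqrt_tr !mulmxA mulmxKV ?hdegmx_sqrt_unit //.
  by rewrite mulmxK ?hdegmx_sqrt_unit // trmx_mul !mulmxA.
by rewrite -x_norm -x_form; exact: symmx_quad_ge hlaplacian_sym_tr lam_le_sym x.
Qed.

Lemma hlaplacian_eigenvalue_ge0 mu : eigenvalue (hlaplacian E R) mu -> 0 <= mu.
Proof.
move=> /eigenvalueP [y yL y_neq0]; set z := y *m invmx (hdegmx E R).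
have yE : y = z *m hdegmx E R by rewrite mulmxKV ?hdegmx_unit.
have zS : z *m (hincmx R E *m (hincmx R E)^T) = mu *: (z *m hdegmx E R).
  by rewrite -yE -yL hlaplacianE !mulmxA.
have zDz_gt0 : 0 < (z *m hdegmx E R *m z^T) 0 0.
  have zQ_neq0 : z *m hdegmx_sqrt != 0.
    by apply: contraNneq y_neq0 => zQ0; rewrite yE -hdegmx_sqrtK mulmxA zQ0 mul0mx.
  have := mulmx_tr_row_gt0 zQ_neq0.
  by rewrite trmx_mul hdegmx_sqrt_tr mulmxA -(mulmxA z hdegmx_sqrt) hdegmx_sqrtK.
have zBzB : ((z *m hincmx R E) *m (z *m hincmx R E)^T) 0 0 =
            mu * (z *m hdegmx E R *m z^T) 0 0.
  by rewrite trmx_mul !mulmxA -(mulmxA z) zS -scalemxAl mxE.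
rewrite -(pmulr_lge0 _ zDz_gt0) -zBzB mulmx_tr_row sumr_ge0 // => j _.
exact: sqr_ge0.
Qed.

Lemma hlaplacian_eigenvalue0 (g : V -> R) v : g v != 0 ->
  (forall e, e \in E -> \sum_(w in e) g w = 0) -> eigenvalue (hlaplacian E R) 0.
Proof.
move=> gv_neq0 g_sum0; apply/eigenvalueP; exists (vrow g *m hdegmx E R).
  have gB0 : vrow g *m hincmx R E = 0.
    apply/rowP => j; rewrite vrow_mul_hincmx mxE.
    by case: (boolP (enum_val j \in E)) => [/g_sum0 ->|_]; rewrite ?mulr0 ?mul0r.
  by rewrite scale0r hlaplacianE !mulmxA mulmxK ?hdegmx_unit // gB0 !mul0mx.
apply: contraNneq gv_neq0 => gD0.
have : vrow g = 0 by rewrite -[vrow g](mulmxK hdegmx_unit) gD0 mul0mx.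
by move/rowP/(_ (enum_rank v)); rewrite !mxE enum_rankK => ->.
Qed.

Lemma smallest_eigenvalue0 (g : V -> R) v : g v != 0 ->
  (forall e, e \in E -> \sum_(w in e) g w = 0) -> smallest_eigenvalue E (0 : R).
Proof.
move=> gv_neq0 g_sum0; split; first exact: hlaplacian_eigenvalue0 gv_neq0 g_sum0.
exact: hlaplacian_eigenvalue_ge0.
Qed.

End NormalizedLaplacian.

Section ColourClasses.
Variables (V : finType) (k : nat) (f : {ffun V -> 'I_k}).

Definition colour_class (e : {set V}) (a : 'I_k) := [set v in e | f v == a].

Lemma sum_card_colour_class e : (\sum_a #|colour_class e a|)%N = #|e|.
Proof.
rewrite -sum1_card (partition_big f predT) //=; apply: eq_bigr => a _.
by rewrite -sum1_card; apply: eq_bigl => v; rewrite inE.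
Qed.

Lemma sum_sqr_card_colour_class_le d e :
  (forall a, #|colour_class e a| <= d)%N ->
  (\sum_a #|colour_class e a| ^ 2 <= d * #|e|)%N.
Proof.
move=> class_le; rewrite -sum_card_colour_class big_distrr /=.
by apply: leq_sum => a _; rewrite expnS expn1 leq_mul2r class_le orbT.
Qed.

Lemma dvdn_sum_sqr_card_colour_class d e : (0 < d)%N ->
  (forall a, #|colour_class e a| <= d)%N ->
  (\sum_a #|colour_class e a| ^ 2)%N = (d * #|e|)%N -> (d %| #|e|)%N.
Proof.
move=> d_gt0 class_le sum_eq.
have sqr_le a : (#|colour_class e a| ^ 2 <= d * #|colour_class e a|)%N.
  by rewrite expnS expn1 leq_mul2r class_le orbT.
have : (\sum_a (d * #|colour_class e a| - #|colour_class e a| ^ 2) == 0)%N.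
  by rewrite sumnB // -big_distrr /= sum_card_colour_class sum_eq subnn.
rewrite sum_nat_eq0 => /forallP class_eq.
rewrite -sum_card_colour_class; apply: dvdn_sum => a _.
have [->|class_gt0] := posnP #|colour_class e a|; first exact: dvdn0.
move: (class_eq a); rewrite subn_eq0 expnS expn1 leq_mul2r /= eqn0Ngt class_gt0 => d_le.
have -> : #|colour_class e a| = d by apply/eqP; rewrite eqn_leq class_le.
exact: dvdnn.
Qed.

Section ColourTest.
Variable R : comPzRingType.

Definition colour_test (a : 'I_k) (v : V) : R := k%:R * (f v == a)%:R - 1.

Lemma sum_colour_test (e : {set V}) a :
  \sum_(v in e) colour_test a v = k%:R * #|colour_class e a|%:R - #|e|%:R.
Proof. by rewrite sumrB -mulr_sumr natr_card_set_in sumr_const. Qed.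

Lemma sum_sqr_sum_colour_test (e : {set V}) :
  \sum_a (\sum_(v in e) colour_test a v) ^+ 2 =
  k%:R ^+ 2 * (\sum_a #|colour_class e a| ^ 2)%N%:R - k%:R * #|e|%:R ^+ 2.
Proof.
have sum_class : \sum_a #|colour_class e a|%:R = #|e|%:R :> R.
  by rewrite -natr_sum sum_card_colour_class.
transitivity (\sum_a (k%:R ^+ 2 * (#|colour_class e a| ^ 2)%:R
    - (k%:R *+ 2 * #|e|%:R) * #|colour_class e a|%:R + #|e|%:R ^+ 2) : R).
  by apply: eq_bigr => a _; rewrite sum_colour_test natrX; ring.
by rewrite big_split /= sumrB -!mulr_sumr natr_sum sum_class sumr_const card_ord; ring.
Qed.

Lemma sum_sum_sqr_colour_test (e : {set V}) :
  \sum_a \sum_(v in e) colour_test a v ^+ 2 = #|e|%:R * (k%:R ^+ 2 - k%:R).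
Proof.
rewrite exchange_big /= [RHS]mulrC [RHS]mulr_natr -[RHS]sumr_const; apply: eq_bigr => v _.
transitivity (\sum_a ((k%:R ^+ 2 - k%:R *+ 2) * (f v == a)%:R + 1) : R).
  by apply: eq_bigr => a _; rewrite /colour_test; case: (f v == a) => /=; ring.
by rewrite big_split /= -mulr_sumr sum_indicator1 sumr_const card_ord; ring.
Qed.

End ColourTest.

End ColourClasses.

Section ColouringBound.
Variables (R : rcfType) (V : finType) (E : {set {set V}}) (c k : nat).
Variables (f : {ffun V -> 'I_k}) (lam : R).
Hypotheses (hdeg_gt0 : forall v, (0 < hdeg E v)%N) (lam_min : smallest_eigenvalue E lam).
Hypotheses (E_uniform : uniform E c) (c_gt0 : (0 < c)%N) (E_neq0 : E != set0).

Definition monochromatic_pairs := (\sum_(e in E) \sum_a #|colour_class f e a| ^ 2)%N.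

Lemma colouring_rayleigh :
  lam * (#|E|%:R * c%:R * (k%:R ^+ 2 - k%:R)) <=
  k%:R ^+ 2 * monochromatic_pairs%:R - #|E|%:R * k%:R * c%:R ^+ 2.
Proof.
have lhsE : \sum_a \sum_(e in E) \sum_(v in e) colour_test f R a v ^+ 2 =
            #|E|%:R * c%:R * (k%:R ^+ 2 - k%:R).
  rewrite exchange_big /= (eq_bigr (fun=> c%:R * (k%:R ^+ 2 - k%:R))) => [|e eE].
    by rewrite sumr_const; ring.
  by rewrite sum_sum_sqr_colour_test E_uniform.
have rhsE : \sum_a \sum_(e in E) (\sum_(v in e) colour_test f R a v) ^+ 2 =
            k%:R ^+ 2 * monochromatic_pairs%:R - #|E|%:R * k%:R * c%:R ^+ 2.
  rewrite exchange_big /= (eq_bigr (fun e => k%:R ^+ 2 *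
      (\sum_a #|colour_class f e a| ^ 2)%N%:R - k%:R * c%:R ^+ 2)) => [|e eE].
    by rewrite sumrB -mulr_sumr -natr_sum !sumr_const; ring.
  by rewrite sum_sqr_sum_colour_test E_uniform.
rewrite -lhsE -rhsE mulr_sumr; apply: ler_sum => a _.
exact: hlaplacian_rayleigh.
Qed.

Lemma colour_count_gt0 : (0 < k)%N.
Proof.
have [e0 e0E] := set0Pn _ E_neq0.
have [v0 _] : {v | v \in e0} by apply/sigW/set0Pn; rewrite -card_gt0 E_uniform.
exact: leq_ltn_trans (ltn_ord (f v0)).
Qed.

Lemma colouring_bound :
  lam * (k%:R - 1) + c%:R <= k%:R * monochromatic_pairs%:R / (#|E| * c)%:R.
Proof.
have k_gt0 : (0 : R) < k%:R by rewrite ltr0n colour_count_gt0.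
have Ec_gt0 : (0 : R) < (#|E| * c)%:R by rewrite ltr0n muln_gt0 card_gt0 E_neq0.
rewrite ler_pdivlMr // -(ler_pM2l k_gt0) -subr_ge0.
have := colouring_rayleigh; rewrite -subr_ge0 natrM.
by congr (_ <= _); ring.
Qed.

Lemma edge_monochromatic_pairs_le d e : d_proper E d f -> e \in E ->
  (\sum_a #|colour_class f e a| ^ 2 <= c * d)%N.
Proof.
move=> /forall_inP f_proper eE; rewrite mulnC -(E_uniform eE).
exact/sum_sqr_card_colour_class_le/forallP/f_proper.
Qed.

Lemma monochromatic_pairs_le d : d_proper E d f ->
  (monochromatic_pairs <= #|E| * (c * d))%N.
Proof.
move=> f_proper; rewrite -sum_nat_const; apply: leq_sum => e eE.
exact: edge_monochromatic_pairs_le.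
Qed.

Lemma proper_colouring_bound d : d_proper E d f ->
  lam * (k%:R - 1) + c%:R <= k%:R * d%:R.
Proof.
move=> f_proper; apply: (le_trans colouring_bound).
rewrite ler_pdivrMr ?ltr0n ?muln_gt0 ?card_gt0 ?E_neq0 // -mulrA ler_wpM2l //.
by rewrite -natrM ler_nat mulnC -mulnA monochromatic_pairs_le.
Qed.

Lemma proper_colouring_tight_dvdn d : (0 < d)%N -> d_proper E d f ->
  k%:R * d%:R <= lam * (k%:R - 1) + c%:R -> (d %| c)%N.
Proof.
move=> d_gt0 f_proper tight.
have pairs_ge : (#|E| * (c * d) <= monochromatic_pairs)%N.
  move: (le_trans tight colouring_bound).
  rewrite ler_pdivlMr ?ltr0n ?muln_gt0 ?card_gt0 ?E_neq0 // -mulrA.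
  by rewrite ler_pM2l ?ltr0n ?colour_count_gt0 // -natrM ler_nat mulnC -mulnA.
have [_] := @leqif_sum _ (mem E) _ _ (fun=> c * d)%N
  (fun e eE => leqif_eq (edge_monochromatic_pairs_le f_proper eE)).
rewrite sum_nat_const eqn_leq pairs_ge monochromatic_pairs_le //= => /esym/forall_inP pairs_eq.
have [e0 e0E] := set0Pn _ E_neq0.
rewrite -(E_uniform e0E); apply: (dvdn_sum_sqr_card_colour_class (f := f) d_gt0).
  by move: f_proper => /forall_inP/(_ e0 e0E)/forallP.
by rewrite (E_uniform e0E) mulnC; apply/eqP/pairs_eq.
Qed.

End ColouringBound.

Section ChromaticNumber.
Variables (V : finType) (E : {set {set V}}) (d : nat).
Hypothesis d_gt0 : (0 < d)%N.

Lemma colorable_card : colorable E d #|V|.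
Proof.
apply/existsP; exists [ffun v => enum_rank v]; apply/forall_inP => e _; apply/forallP => i.
apply: leq_trans d_gt0; rewrite -(cards1 (enum_val i)); apply/subset_leq_card/subsetP => v.
by rewrite !inE ffunE => /andP [_ /eqP <-]; rewrite enum_rankK.
Qed.

Let has_colorable : has (colorable E d) (iota 0 #|V|.+1).
Proof. apply/hasP; exists #|V|; [by rewrite mem_iota add0n ltnSn | exact: colorable_card]. Qed.

Let chi_lt : (chi E d < #|V|.+1)%N.
Proof. by rewrite /chi -[X in (_ < X)%N](size_iota 0 #|V|.+1) -has_find. Qed.

Lemma chi_colorable : colorable E d (chi E d).
Proof.
have := nth_find 0 has_colorable; rewrite nth_iota; last exact: chi_lt.
by rewrite add0n.
Qed.

Lemma chi_min k : (k < chi E d)%N -> ~~ colorable E d k.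
Proof.
move=> k_lt; have := before_find 0 k_lt; rewrite nth_iota ?add0n => [-> //|].
exact: ltn_trans k_lt chi_lt.
Qed.

Lemma chi_eq k : colorable E d k -> (forall j, (j < k)%N -> ~~ colorable E d j) ->
  chi E d = k.
Proof.
move=> k_col k_min; apply/eqP; rewrite eq_sym.
case: (ltngtP k (chi E d)) => [k_lt | chi_lt' | //].
  by case: (negP (chi_min k_lt) k_col).
by case: (negP (k_min _ chi_lt') chi_colorable).
Qed.

End ChromaticNumber.

Section LowerBound.
Variables (R : rcfType) (V : finType) (E : {set {set V}}) (c d : nat) (lam : R).
Hypotheses (c_ge2 : (2 <= c)%N) (d_gt0 : (0 < d)%N).
Hypotheses (E_uniform : uniform E c) (E_neq0 : E != set0).
Hypotheses (hdeg_gt0 : forall v, (0 < hdeg E v)%N) (lam_min : smallest_eigenvalue E lam).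

Let c_gt0 : (0 < c)%N. Proof. exact: ltn_trans c_ge2. Qed.

Lemma smallest_eigenvalue_lt1 : lam < 1.
Proof.
have /existsP [f f_proper] := colorable_card E (ltn0Sn 0).
have := proper_colouring_bound hdeg_gt0 lam_min E_uniform c_gt0 E_neq0 f_proper.
have [e0 e0E] := set0Pn _ E_neq0.
have V_ge : (c <= #|V|)%N by rewrite -(E_uniform e0E) max_card.
have V_gt1 : (1 : R) < #|V|%:R by rewrite ltr1n (leq_trans c_ge2 V_ge).
have : (2 : R) <= c%:R by rewrite ler_nat.
nra.
Qed.

Let d_sub_lam_gt0 : 0 < d%:R - lam.
Proof. by rewrite subr_gt0 (lt_le_trans smallest_eigenvalue_lt1) // ler1n. Qed.

Lemma chi_lower_bound : (c%:R - lam) / (d%:R - lam) <= (chi E d)%:R.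
Proof.
have /existsP [f f_proper] := chi_colorable E d_gt0.
have := proper_colouring_bound hdeg_gt0 lam_min E_uniform c_gt0 E_neq0 f_proper.
rewrite ler_pdivrMr //; lra.
Qed.

Lemma chi_tight_dvdn : (chi E d)%:R = (c%:R - lam) / (d%:R - lam) -> (d %| c)%N.
Proof.
move=> chi_tight; have /existsP [f f_proper] := chi_colorable E d_gt0.
apply: (proper_colouring_tight_dvdn hdeg_gt0 lam_min E_uniform c_gt0 E_neq0 d_gt0 f_proper).
have : (chi E d)%:R * (d%:R - lam) = c%:R - lam by rewrite chi_tight mulfVK ?gt_eqF.
lra.
Qed.

End LowerBound.

Section SingleEdge.
Variable c : nat.

Definition single_edge : {set {set 'I_c}} := [set setT].

Lemma single_edge_uniform : uniform single_edge c.
Proof. by move=> e; rewrite inE => /eqP ->; rewrite cardsT card_ord. Qed.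

Lemma single_edge_neq0 : single_edge != set0.
Proof. by apply/set0Pn; exists setT; rewrite inE. Qed.

Lemma hdeg_single_edge v : hdeg single_edge v = 1%N.
Proof.
rewrite /hdeg (_ : [set e in single_edge | v \in e] = [set setT]) ?cards1 //.
by apply/setP => e; rewrite !inE andb_idr // => /eqP ->; rewrite inE.
Qed.

Lemma single_edge_smallest_eigenvalue (R : rcfType) :
  (1 < c)%N -> smallest_eigenvalue single_edge (0 : R).
Proof.
move=> c_gt1; pose i0 := Ordinal (ltnW c_gt1); pose i1 := Ordinal c_gt1.
apply: (@smallest_eigenvalue0 R _ _ _ (fun v => (i0 == v)%:R - (i1 == v)%:R) i0).
- by move=> v; rewrite hdeg_single_edge.
- by rewrite eqxx (_ : (i1 == i0) = false) // subr0 oner_neq0.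
move=> e; rewrite inE => /eqP ->; rewrite (eq_bigl predT) => [|v]; last by rewrite inE.
by rewrite sumrB !sum_indicator1 subrr.
Qed.

Lemma chi_single_edge d : (0 < d)%N -> (d %| c)%N -> chi single_edge d = (c %/ d)%N.
Proof.
move=> d_gt0 d_dvd_c; apply: chi_eq; first exact: d_gt0.
  have quot_lt (v : 'I_c) : (v %/ d < c %/ d)%N by rewrite ltn_divLR // divnK // ltn_ord.
  apply/existsP; exists [ffun v => Ordinal (quot_lt v)].
  apply/forall_inP => e _; apply/forallP => a.
  pose rem (v : 'I_c) : 'I_d := Ordinal (ltn_pmod v d_gt0).
  rewrite -(card_in_imset (f := rem)); first by rewrite -[X in (_ <= X)%N](card_ord d) max_card.
  move=> u w; rewrite !inE !ffunE.
  move=> /andP [_ /eqP /(congr1 val) /= uq] /andP [_ /eqP /(congr1 val) /= wq] /(congr1 val) /= uw.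
  by apply/val_inj; rewrite /= (divn_eq u d) (divn_eq w d) uq wq uw.
move=> j j_lt; apply/negP => /existsP [f /forall_inP f_proper].
have : (c <= j * d)%N.
  rewrite -{1}(card_ord c) -cardsT -(sum_card_colour_class f).
  apply: (@leq_trans (\sum_(a < j) d)); last by rewrite sum_nat_const card_ord.
  by apply: leq_sum => a _; exact: (forallP (f_proper _ (set11 _)) a).
by move: j_lt; rewrite leq_divRL // mulSn; lia.
Qed.

End SingleEdge.

Theorem mainTheorem6 (R : realType) (c d : nat) :
  (2 <= c)%N -> (1 <= d <= c - 1)%N ->
  (* the lower bound *)
  (forall (V : finType) (E : {set {set V}}) (lam : R),
      uniform E c -> E != set0 -> (forall v, 0 < hdeg E v)%N ->
      smallest_eigenvalue E lam ->
      (c%:R - lam) / (d%:R - lam) <= (chi E d)%:R)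
  /\
  (* equality forces d | c *)
  ((exists (V : finType) (E : {set {set V}}) (lam : R),
      [/\ uniform E c, E != set0, (forall v, 0 < hdeg E v)%N,
          smallest_eigenvalue E lam &
          (chi E d)%:R = (c%:R - lam) / (d%:R - lam)]) ->
   (d %| c)%N)
  /\
  (* if d | c, equality is attained *)
  ((d %| c)%N ->
   exists (V : finType) (E : {set {set V}}) (lam : R),
      [/\ uniform E c, E != set0, (forall v, 0 < hdeg E v)%N,
          smallest_eigenvalue E lam &
          (chi E d)%:R = (c%:R - lam) / (d%:R - lam)]).
Proof.
move=> c_ge2 /andP [d_gt0 _]; split; [|split].
- by move=> V E lam E_uniform E_neq0 hdeg_gt0 lam_min; exact: chi_lower_bound.
- move=> [V [E [lam [E_uniform E_neq0 hdeg_gt0 lam_min chi_tight]]]].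
  exact: chi_tight_dvdn chi_tight.
- move=> d_dvd_c; exists 'I_c, (single_edge c), 0; split.
  + exact: single_edge_uniform.
  + exact: single_edge_neq0.
  + by move=> v; rewrite hdeg_single_edge.
  + exact: single_edge_smallest_eigenvalue.
  + by rewrite chi_single_edge // !subr0 natf_div.
Qed.
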